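(* Let $f: X \to Y$ be an open perfect surjection (continuous, closed, with compact fibers) onto a set star Hurewicz space $Y$. Then $X$ is nearly set star Hurewicz.
   Context: For a subset $A$ of a space $X$ and a collection $\mathcal{U}$ of subsets of $X$, ${\rm St}(A,\mathcal{U}) = \bigcup\{U \in \mathcal{U}: U \cap A \neq \emptyset\}$. A space $Y$ is set star Hurewicz if for each nonempty $B \subset Y$ and each sequence $(\mathcal{V}_n: n\in\mathbb{N})$ of collections of sets open in $Y$ with $\overline{B} \subset \bigcup\mathcal{V}_n$ for all $n$, there are finite $\mathcal{W}_n \subset \mathcal{V}_n$ such that each $y \in B$ lies in ${\rm St}(\bigcup\mathcal{W}_n,\mathcal{V}_n)$ for all but finitely many $n$. A space $X$ is nearly set star Hurewicz if for each nonempty $A \subset X$ and each sequence $(\mathcal{U}_n: n\in\mathbb{N})$ of open covers of $X$ there are finite $\mathcal{V}_n \subset \mathcal{U}_n$ such that each $x \in A$ lies in ${\rm St}(\bigcup\mathcal{V}_n,\mathcal{U}_n)$ for all but finitely many $n$. *)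

From HB Require Import structures.
From mathcomp Require Import all_boot all_order.
From mathcomp Require Import all_classical.
From mathcomp Require Import topology.
Set Implicit Arguments. Unset Strict Implicit. Unset Printing Implicit Defensive.
Local Open Scope classical_set_scope.

Definition St {T : Type} (A : set T) (U : set (set T)) : set T :=
  \bigcup_(V in U `&` [set V | V `&` A !=set0]) V.

Definition set_star_Hurewicz (Y : topologicalType) : Prop :=
  forall (B : set Y), B !=set0 ->
  forall (V : nat -> set (set Y)),
    (forall n, V n `<=` open) ->
    (forall n, closure B `<=` \bigcup_(W in V n) W) ->
    exists W : nat -> set (set Y),
      (forall n, W n `<=` V n /\ finite_set (W n)) /\
      (forall y, B y -> exists N, forall n, (N <= n)%N ->
          St (\bigcup_(O in W n) O) (V n) y).

Definition nearly_set_star_Hurewicz (X : topologicalType) : Prop :=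
  forall (A : set X), A !=set0 ->
  forall (U : nat -> set (set X)),
    (forall n, U n `<=` open) ->
    (forall n, \bigcup_(O in U n) O = setT) ->
    exists V : nat -> set (set X),
      (forall n, V n `<=` U n /\ finite_set (V n)) /\
      (forall x, A x -> exists N, forall n, (N <= n)%N ->
          St (\bigcup_(O in V n) O) (U n) x).

Definition open_map {X Y : topologicalType} (f : X -> Y) : Prop :=
  forall O : set X, open O -> open (f @` O).
Definition closed_map {X Y : topologicalType} (f : X -> Y) : Prop :=
  forall C : set X, closed C -> closed (f @` C).

Definition perfect_map {X Y : topologicalType} (f : X -> Y) : Prop :=
  continuous f /\ closed_map f /\ (forall y : Y, compact (f @^-1` [set y])).

From HB Require Import structures.
From mathcomp Require Import all_boot all_order all_classical topology.
From mathcomp Require Import finmap.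
Local Open Scope classical_set_scope.

(* Fix n.  Each fiber f^-1(y) is compact, so finitely many
   members D(n,y) of U_n, each meeting the fiber, cover it.  Their "tube"
     W(n,y) = {z | f^-1(z) is contained in U D(n,y) and meets every V in D(n,y)}
   is open because f is closed and open, and contains y.  The families
   {W(n,y) | y in Y} are open covers of Y, so the set star Hurewicz property of
   Y applied to f(A) yields finite subfamilies, indexed by finite sets of
   points I_n, and we take V_n = U_{y in I_n} D(n,y).  The key observation
   ([tube_star]) is that whenever x lies over a tube W(n,y') that meets a tube
   W(n,y), some member of D(n,y') contains x and meets U D(n,y); so the star
   of U V_n with respect to U_n catches x as soon as the star of the chosen
   tubes catches f(x). *)

(* Compactness gives finite subcovers without assuming the space pointed:
   the library states this for pointed spaces, and an empty set is trivial. *)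
Lemma compact_cover_compact (T : topologicalType) (K : set T) :
  compact K -> cover_compact K.
Proof.
move=> cK; have [[k _]|K0] := pselect (K !=set0); last first.
  move=> I D g _ _; exists fset0 => // x Kx.
  by exfalso; apply: K0; exists x.
pose Tk : ptopologicalType :=
  HB.pack_for ptopologicalType T (isPointed.Build T k).
have cKk : @compact Tk K by exact: cK.
by move: cKk; rewrite compact_cover.
Qed.

Lemma compact_meeting_subcover (T : topologicalType) (K : set T)
    (U : set (set T)) :
  compact K -> U `<=` open -> K `<=` \bigcup_(V in U) V ->
  exists D : set (set T), [/\ finite_set D, D `<=` U,
    (forall V, D V -> V `&` K !=set0) & K `<=` \bigcup_(V in D) V].
Proof.
move=> /compact_cover_compact cK Uop KU.
have [|x Kx|D' sD' KD'] := cK _ (U `&` [set V | V `&` K !=set0]) id.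
- by move=> V [/Uop].
- by have [V UV Vx] := KU x Kx; exists V => //; split => //; exists x.
exists [set` D']; split; first exact: finite_fset.
- by move=> V /sD'; rewrite in_setE => -[].
- by move=> V /sD'; rewrite in_setE => -[].
- by move=> x /KD' [V D'V Vx]; exists V.
Qed.

Lemma open_bigcap_finite (T : topologicalType) (I : choiceType) (D : set I)
    (g : I -> set T) :
  finite_set D -> (forall i, D i -> open (g i)) -> open (\bigcap_(i in D) g i).
Proof.
move=> /finite_fsetP [D' ->] gop; rewrite openE => z gz.
apply: filter_bigI => i iD; apply: open_nbhs_nbhs.
by split; [exact: gop | exact: gz i iD].
Qed.

(* The tube of a family D: the points whose fiber lies in the union of D and
   meets every member of D. *)
Definition tube {X Y : Type} (f : X -> Y) (D : set (set X)) : set Y :=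
  ~` (f @` ~` \bigcup_(V in D) V) `&` \bigcap_(V in D) f @` V.

Lemma open_tube (X Y : topologicalType) (f : X -> Y) (D : set (set X)) :
  open_map f -> closed_map f -> finite_set D -> D `<=` open -> open (tube f D).
Proof.
move=> fopen fclosed Dfin Dop; apply: openI.
  by rewrite openC; apply: fclosed; rewrite closedC; exact: bigcup_open.
by apply: open_bigcap_finite => // V /Dop; exact: fopen.
Qed.

Lemma tube_fiber {X Y : Type} (f : X -> Y) (D : set (set X)) (y : Y) :
  f @^-1` [set y] `<=` \bigcup_(V in D) V ->
  (forall V, D V -> V `&` f @^-1` [set y] !=set0) -> tube f D y.
Proof.
move=> fibD Dfib; split; first by move=> [x nDx fxy]; apply: nDx; exact: fibD.
by move=> V /Dfib [x [Vx fxy]]; exists x.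
Qed.

Lemma tube_star {X Y : Type} {f : X -> Y} {D D' : set (set X)} {x : X} {z : Y} :
  tube f D (f x) -> tube f D z -> tube f D' z ->
  exists2 V, D V & V x /\ V `&` \bigcup_(V' in D') V' !=set0.
Proof.
move=> [xD _] [_ zD] [zD' _].
have [V DV Vx] : (\bigcup_(V in D) V) x.
  by apply: contrapT => nx; apply: xD; exists x.
exists V => //; split => //.
have [x' Vx' fx'z] := zD V DV; exists x'; split => //.
by apply: contrapT => nx'; apply: zD'; exists x'.
Qed.

Lemma finite_range_index {I T : Type} (g : I -> T) (F : set T) :
  finite_set F -> F `<=` range g ->
  exists J : set I, finite_set J /\ g @` J = F.
Proof.
move=> Ffin Fg; have [[S0 /Fg [i0 _ _]]|F0] := pselect (F !=set0); last first.
  exists set0; split; first exact: finite_set0.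
  rewrite image_set0; apply/seteqP; split; first exact: sub0set.
  by move=> S FS; exfalso; apply: F0; exists S.
have /choice [h gh] : forall S : T, exists i : I, F S -> g i = S.
  move=> S; have [/Fg [i _ giS]|nFS] := pselect (F S); first by exists i.
  by exists i0 => /nFS.
exists (h @` F); split; first exact: finite_image.
apply/seteqP; split=> [_ [_ [S FS <-] <-]|S FS]; first by rewrite gh.
by exists (h S); [exists S | exact: gh].
Qed.

Theorem theorem3p15 (X Y : topologicalType) (f : X -> Y) :
  open_map f -> perfect_map f -> (forall y : Y, exists x : X, f x = y) ->
  set_star_Hurewicz Y -> nearly_set_star_Hurewicz X.
Proof.
move=> fopen [_ [fclosed fcpt]] _ HY A [a Aa] U Uop Ucov.
have /choice [D HD] : forall ny : nat * Y, exists D : set (set X),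
    [/\ finite_set D, D `<=` U ny.1,
      (forall V, D V -> V `&` f @^-1` [set ny.2] !=set0) &
      f @^-1` [set ny.2] `<=` \bigcup_(V in D) V].
  move=> [n y]; apply: compact_meeting_subcover => // x _.
  by rewrite /= (Ucov n).
pose W n y := tube f (D (n, y)).
have [|n _ [y _ <-]|n z _|Wf [WfW Wfstar]] :=
  HY (f @` A) _ (fun n => range (W n)).
- by exists (f a), a.
- by have [Dfin DU _ _] := HD (n, y); apply: open_tube => // V /DU /Uop.
- have [_ _ Dmeet Dcov] := HD (n, z).
  by exists (W n z) => //; exact: tube_fiber.
have /choice [I HI] : forall n, exists J, finite_set J /\ W n @` J = Wf n.
  by move=> n; have [WfWn Wffin] := WfW n; exact: finite_range_index.
exists (fun n => \bigcup_(y in I n) D (n, y)); split.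
  move=> n; have [Ifin _] := HI n; split.
    by move=> V [y _ DV]; have [_ DU _ _] := HD (n, y); exact: DU.
  by apply: bigcup_finite => // y _; have [] := HD (n, y).
move=> x Ax; have [N HN] := Wfstar (f x) (ex_intro2 _ _ x Ax erefl).
exists N => n /HN [_ [[y' _ <-] [z [y'z [S WfS Sz]]]] y'fx].
have [_ WI] := HI n; rewrite -WI in WfS; have [y Iy WyS] := WfS.
rewrite -WyS in Sz.
have [V DV [Vx [x' [Vx' [V' DV' V'x']]]]] := tube_star y'fx y'z Sz.
exists V => //; split; first by have [_ DU _ _] := HD (n, y'); exact: DU.
by exists x'; split => //; exists V' => //; exists y.
Qed.
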